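(* Let $h>0$, $\Omega\in\mathbb{R}$, $g<0$. Consider the discrete Gross–Pitaevskii lattice $$i\dot{\phi}_n+\frac{1}{h^2}(\phi_{n+1}-2\phi_n+\phi_{n-1})-\Omega^2(hn)^2\phi_n-g|\phi_n|^2\phi_n=0,\quad n\in\mathbb{Z},$$ with vanishing boundary conditions $\lim_{|n|\to\infty}\phi_n(t)=0$ for all $t\ge0$. Let the initial datum $\phi(0)$ have finite discrete variance, $V_d(0):=h\sum_{n\in\mathbb{Z}}(hn)^2|\phi_n(0)|^2<\infty$, and let $\phi\in C^1([0,\infty),l^2)$ be the corresponding global-in-time solution. Then $$V_d(t):=h\sum_{n\in\mathbb{Z}}(hn)^2|\phi_n(t)|^2<\infty\quad\text{for all } t>0.$$
   Context: $l^2$ is the space of complex sequences $u=(u_n)_{n\in\mathbb{Z}}$ with $\|u\|_{l^2}^2=h\sum_{n}|u_n|^2<\infty$. *)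

From Stdlib Require Import Reals ZArith.
From Coquelicot Require Import Coquelicot.
Open Scope R_scope.

(* Sum over n in Z of a nonnegative family a, folded onto nat:
   term k = a(k) + a(-(k+1)), so k = 0,1,... enumerates Z exactly once. *)
Definition zfold (a : Z -> R) (k : nat) : R :=
  a (Z.of_nat k) + a (- (Z.of_nat k + 1))%Z.

(* u ∈ l^2 : h * sum_n |u_n|^2 < oo (h > 0, so h is irrelevant for finiteness). *)
Definition in_l2 (u : Z -> C) : Prop :=
  ex_series (zfold (fun n => Cmod (u n) ^ 2)).

Definition l2norm (h : R) (u : Z -> C) : R :=
  sqrt (h * Series (zfold (fun n => Cmod (u n) ^ 2))).

Definition finite_variance (h : R) (u : Z -> C) : Prop :=
  ex_series (zfold (fun n => (h * IZR n) ^ 2 * Cmod (u n) ^ 2)).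

(* phi ∈ C^1([0,oo), l^2) with derivative dphi : phi(t), dphi(t) ∈ l^2 for t>=0,
   the difference quotient converges to dphi(t) in l^2 (one-sided at t = 0),
   and dphi is continuous [0,oo) -> l^2. *)
Definition C1_l2 (h : R) (phi dphi : R -> Z -> C) : Prop :=
  (forall t, 0 <= t -> in_l2 (phi t) /\ in_l2 (dphi t)) /\
  (forall t, 0 <= t ->
     filterlim
       (fun s => l2norm h (fun n => ((phi (t + s)%R n - phi t n) / RtoC s - dphi t n)%C))
       (within (fun s => s <> 0 /\ 0 <= t + s) (locally 0))
       (locally 0)) /\
  (forall t, 0 <= t ->
     filterlim (fun s => l2norm h (fun n => (dphi s n - dphi t n)%C))
       (within (fun s => 0 <= s) (locally t))
       (locally 0)).

Definition dGP_eq (h Omega g : R) (phi dphi : R -> Z -> C) (t : R) (n : Z) : Prop :=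
  (Ci * dphi t n
   + RtoC (/ h ^ 2) * (phi t (n + 1)%Z - RtoC 2 * phi t n + phi t (n - 1)%Z)
   - RtoC (Omega ^ 2 * (h * IZR n) ^ 2) * phi t n
   - RtoC (g * Cmod (phi t n) ^ 2) * phi t n)%C = 0%C.

Definition vanishing_bc (phi : R -> Z -> C) (t : R) : Prop :=
  forall eps : R, 0 < eps -> exists N : nat,
    forall n : Z, (Z.of_nat N <= Z.abs n)%Z -> Cmod (phi t n) < eps.

From Stdlib Require Import Reals ZArith Lra Lia Classical.
From Coquelicot Require Import Coquelicot.
Open Scope R_scope.

(* Truncate the discrete variance with the weights
   w_N(n) = min(n^2, max(0, N^2 + N - |n|)), which equal n^2 for |n| <= N, have
   finite support and a controlled discrete gradient
   (w_N(n+1) - w_N(n))^2 <= 8 w_N(n) + 2.  The mass density |phi_n|^2 obeys a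
   discrete conservation law with flux (1/h^2) Im(conj(phi_n) phi_(n+1)), in
   which the potential and the nonlinearity cancel.  Summation by parts and the
   gradient bound then give d/dt W_N <= (2/h^2) (W_N + 3 M) for the truncated
   variance W_N, where M bounds the l^2 mass on [0, T]; M exists because phi is
   continuous into l^2 and [0, T] is compact.  Gronwall bounds W_N(T)
   uniformly in N, and letting N go to infinity bounds the variance at T. *)

(** * Sums over Z *)

(* [zsum f J] sums [f n] over [- J - 1 <= n <= J]. *)
Definition zsum (f : Z -> R) (J : nat) : R := sum_f_R0 (zfold f) J.

Lemma zfold_nonneg (f : Z -> R) (k : nat) : (forall n, 0 <= f n) -> 0 <= zfold f k.
Proof.
  intros Hf; unfold zfold.
  pose proof (Hf (Z.of_nat k)); pose proof (Hf (- (Z.of_nat k + 1))%Z); lra.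
Qed.

Lemma zsum_S (f : Z -> R) (J : nat) :
  zsum f (S J) = zsum f J + f (Z.of_nat (S J)) + f (- (Z.of_nat (S J) + 1))%Z.
Proof. unfold zsum; rewrite tech5; unfold zfold; ring. Qed.

Lemma zsum_ext_range (f g : Z -> R) (J : nat) :
  (forall n, (- Z.of_nat J - 1 <= n <= Z.of_nat J)%Z -> f n = g n) -> zsum f J = zsum g J.
Proof. intros Hfg; apply sum_eq; intros k Hk; unfold zfold; rewrite !Hfg; auto; lia. Qed.

Lemma zsum_ext (f g : Z -> R) (J : nat) : (forall n, f n = g n) -> zsum f J = zsum g J.
Proof. intros Hfg; apply zsum_ext_range; auto. Qed.

Lemma zsum_plus (f g : Z -> R) (J : nat) : zsum (fun n => f n + g n) J = zsum f J + zsum g J.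
Proof. unfold zsum; rewrite <- plus_sum; apply sum_eq; intros; unfold zfold; ring. Qed.

Lemma zsum_scal (c : R) (f : Z -> R) (J : nat) : zsum (fun n => c * f n) J = c * zsum f J.
Proof. unfold zsum; rewrite scal_sum; apply sum_eq; intros; unfold zfold; ring. Qed.

Lemma zsum_le (f g : Z -> R) (J : nat) : (forall n, f n <= g n) -> zsum f J <= zsum g J.
Proof.
  intros Hfg; apply sum_Rle; intros k _; unfold zfold.
  pose proof (Hfg (Z.of_nat k)); pose proof (Hfg (- (Z.of_nat k + 1))%Z); lra.
Qed.

Lemma zsum_le_mono (f : Z -> R) (J J' : nat) :
  (forall n, 0 <= f n) -> (J <= J')%nat -> zsum f J <= zsum f J'.
Proof.
  intros Hf HJ; induction HJ as [|J' _ IH]; [lra|].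
  unfold zsum in *; rewrite tech5; pose proof (zfold_nonneg f (S J') Hf); lra.
Qed.

Lemma zsum_shift (f : Z -> R) (J : nat) :
  zsum (fun n => f (n + 1)%Z) J = zsum f J + f (Z.of_nat J + 1)%Z - f (- Z.of_nat J - 1)%Z.
Proof.
  induction J as [|J IH]; [unfold zsum, zfold; simpl; ring|].
  rewrite !zsum_S, IH.
  replace (- (Z.of_nat (S J) + 1) + 1)%Z with (- Z.of_nat (S J))%Z by lia.
  replace (Z.of_nat J + 1)%Z with (Z.of_nat (S J)) by lia.
  replace (- Z.of_nat J - 1)%Z with (- Z.of_nat (S J))%Z by lia.
  replace (- Z.of_nat (S J) - 1)%Z with (- (Z.of_nat (S J) + 1))%Z by lia. ring.
Qed.

Lemma zsum_by_parts (w b : Z -> R) (J : nat) :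
  w (Z.of_nat J + 1)%Z = 0 -> w (- Z.of_nat J - 1)%Z = 0 ->
  zsum (fun n => w n * (b (n - 1)%Z - b n)) J = zsum (fun n => (w (n + 1)%Z - w n) * b n) J.
Proof.
  intros Hr Hl.
  assert (Hsh := zsum_shift (fun n => w n * b (n - 1)%Z) J); cbv beta in Hsh.
  rewrite Hr, Hl in Hsh.
  rewrite (zsum_ext _ (fun n => w n * b (n - 1)%Z + (-1) * (w n * b n))) by (intros; ring).
  rewrite (zsum_ext (fun n => (w (n + 1)%Z - w n) * b n)
                    (fun n => w (n + 1)%Z * b (n + 1 - 1)%Z + (-1) * (w n * b n)))
    by (intros n; rewrite Z.add_simpl_r; ring).
  rewrite !zsum_plus, Hsh; ring.
Qed.

Lemma is_derive_zsum (F : R -> Z -> R) (dF : Z -> R) (t : R) (J : nat) :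
  (forall n, is_derive (fun s => F s n) t (dF n)) ->
  is_derive (fun s => zsum (F s) J) t (zsum dF J).
Proof.
  intros HF; unfold zsum.
  apply (is_derive_ext (fun s => sum_n (fun k => zfold (F s) k) J)); [intros; apply sum_n_Reals|].
  rewrite <- sum_n_Reals.
  apply (@is_derive_sum_n R_AbsRing R_NormedModule (fun k s => zfold (F s) k)); intros k _.
  apply (is_derive_plus (fun s => F s _) (fun s => F s _)); auto.
Qed.

Lemma ex_series_zfold_ext (f g : Z -> R) :
  (forall n, f n = g n) -> ex_series (zfold f) -> ex_series (zfold g).
Proof. intros Hfg; apply ex_series_ext; intros k; unfold zfold; rewrite !Hfg; auto. Qed.

Lemma ex_series_zfold_plus (f g : Z -> R) :
  ex_series (zfold f) -> ex_series (zfold g) -> ex_series (zfold (fun n => f n + g n)).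
Proof.
  intros Hf Hg; apply (ex_series_ext (fun k => plus (zfold f k) (zfold g k))).
  - intros k; unfold zfold, plus; simpl; ring.
  - apply (@ex_series_plus R_AbsRing R_NormedModule); auto.
Qed.

Lemma ex_series_zfold_scal (c : R) (f : Z -> R) :
  ex_series (zfold f) -> ex_series (zfold (fun n => c * f n)).
Proof.
  intros Hf; apply (ex_series_ext (fun k => scal c (zfold f k))).
  - intros k; unfold zfold, scal; simpl; unfold mult; simpl; ring.
  - apply (@ex_series_scal R_AbsRing R_NormedModule); auto.
Qed.

Lemma Series_zfold_plus (f g : Z -> R) :
  ex_series (zfold f) -> ex_series (zfold g) ->
  Series (zfold (fun n => f n + g n)) = Series (zfold f) + Series (zfold g).
Proof.
  intros Hf Hg; rewrite <- Series_plus by auto.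
  apply Series_ext; intros k; unfold zfold; ring.
Qed.

Lemma Series_zfold_scal (c : R) (f : Z -> R) :
  Series (zfold (fun n => c * f n)) = c * Series (zfold f).
Proof. rewrite <- Series_scal_l; apply Series_ext; intros k; unfold zfold; ring. Qed.

Lemma zfold_le (f g : Z -> R) (k : nat) :
  (forall n, 0 <= f n <= g n) -> 0 <= zfold f k <= zfold g k.
Proof.
  intros Hfg; unfold zfold.
  pose proof (Hfg (Z.of_nat k)); pose proof (Hfg (- (Z.of_nat k + 1))%Z); lra.
Qed.

Lemma ex_series_zfold_le (f g : Z -> R) :
  (forall n, 0 <= f n <= g n) -> ex_series (zfold g) -> ex_series (zfold f).
Proof.
  intros Hfg Hg; apply (@ex_series_le R_AbsRing R_CompleteNormedModule _ (zfold g)); auto.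
  intros k; destruct (zfold_le f g k Hfg); change (norm (zfold f k)) with (Rabs (zfold f k)).
  rewrite Rabs_pos_eq; auto.
Qed.

Lemma Series_zfold_le (f g : Z -> R) :
  (forall n, 0 <= f n <= g n) -> ex_series (zfold g) -> Series (zfold f) <= Series (zfold g).
Proof. intros Hfg Hg; apply Series_le; auto; intros k; apply zfold_le; auto. Qed.

Lemma zsum_le_Series (f : Z -> R) (J : nat) :
  (forall n, 0 <= f n) -> ex_series (zfold f) -> zsum f J <= Series (zfold f).
Proof.
  intros Hf HS; unfold zsum; rewrite <- sum_n_Reals.
  apply is_lim_seq_incr_compare; [apply Series_correct, HS|].
  intros k; rewrite sum_Sn; pose proof (zfold_nonneg f (S k) Hf); unfold plus; simpl; lra.
Qed.

Lemma ex_series_zfold_bounded (f : Z -> R) (M : R) :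
  (forall n, 0 <= f n) -> (forall J, zsum f J <= M) -> ex_series (zfold f).
Proof.
  intros Hf HM; destruct (ex_finite_lim_seq_incr (sum_n (zfold f)) M) as [l Hl].
  - intros k; rewrite sum_Sn; pose proof (zfold_nonneg f (S k) Hf); unfold plus; simpl; lra.
  - intros J; rewrite sum_n_Reals; apply HM.
  - exists l; exact Hl.
Qed.

Lemma le_Series_zfold (f : Z -> R) (n : Z) :
  (forall n, 0 <= f n) -> ex_series (zfold f) -> f n <= Series (zfold f).
Proof.
  intros Hf HS.
  assert (Hk : exists k, f n <= zfold f k).
  { unfold zfold; destruct (Z.le_gt_cases 0 n).
    - exists (Z.to_nat n); rewrite Z2Nat.id by lia; pose proof (Hf (- (n + 1))%Z); lra.
    - exists (Z.to_nat (- n - 1)); rewrite Z2Nat.id by lia.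
      replace (- (- n - 1 + 1))%Z with n by lia; pose proof (Hf (- n - 1)%Z); lra. }
  destruct Hk as [k Hk]; apply Rle_trans with (zsum f k); [|apply zsum_le_Series; auto].
  unfold zsum; destruct k as [|k]; [simpl; lra|].
  rewrite tech5; pose proof (cond_pos_sum (zfold f) k (fun j => zfold_nonneg f j Hf)); lra.
Qed.

Lemma Cmod_sqr_plus_le (a b : C) : Cmod (a + b) ^ 2 <= 2 * Cmod a ^ 2 + 2 * Cmod b ^ 2.
Proof.
  assert (Cmod (a + b) ^ 2 <= (Cmod a + Cmod b) ^ 2)
    by (apply pow_incr; split; [apply Cmod_ge_0 | apply Cmod_triangle]).
  pose proof (pow2_ge_0 (Cmod a - Cmod b)); nra.
Qed.

Definition mass (u : Z -> C) : R := Series (zfold (fun n => Cmod (u n) ^ 2)).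

Lemma in_l2_ext (u v : Z -> C) : (forall n, u n = v n) -> in_l2 u -> in_l2 v.
Proof. intros Huv; apply ex_series_zfold_ext; intros n; rewrite Huv; auto. Qed.

Lemma mass_ext (u v : Z -> C) : (forall n, u n = v n) -> mass u = mass v.
Proof. intros Huv; apply Series_ext; intros k; unfold zfold; rewrite !Huv; auto. Qed.

Lemma in_l2_plus (u v : Z -> C) : in_l2 u -> in_l2 v -> in_l2 (fun n => u n + v n)%C.
Proof.
  intros Hu Hv; apply (ex_series_zfold_le _ (fun n => 2 * Cmod (u n) ^ 2 + 2 * Cmod (v n) ^ 2)).
  - intros n; split; [apply pow2_ge_0 | apply Cmod_sqr_plus_le].
  - apply ex_series_zfold_plus; apply ex_series_zfold_scal; auto.
Qed.

Lemma in_l2_scal (c : C) (u : Z -> C) : in_l2 u -> in_l2 (fun n => c * u n)%C.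
Proof.
  intros Hu; apply (ex_series_zfold_ext (fun n => Cmod c ^ 2 * Cmod (u n) ^ 2)).
  - intros n; rewrite Cmod_mult; ring.
  - apply ex_series_zfold_scal, Hu.
Qed.

Lemma mass_scal (c : C) (u : Z -> C) : mass (fun n => c * u n)%C = Cmod c ^ 2 * mass u.
Proof.
  unfold mass; rewrite <- Series_zfold_scal; apply Series_ext.
  intros k; unfold zfold; rewrite !Cmod_mult; ring.
Qed.

Lemma mass_plus_le (u v : Z -> C) :
  in_l2 u -> in_l2 v -> mass (fun n => u n + v n)%C <= 2 * mass u + 2 * mass v.
Proof.
  intros Hu Hv; unfold mass; rewrite <- !Series_zfold_scal, <- Series_zfold_plus
    by (apply ex_series_zfold_scal; auto).
  apply Series_zfold_le.
  - intros n; split; [apply pow2_ge_0 | apply Cmod_sqr_plus_le].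
  - apply ex_series_zfold_plus; apply ex_series_zfold_scal; auto.
Qed.

Lemma Cmod_sqr_le_mass (u : Z -> C) (n : Z) : in_l2 u -> Cmod (u n) ^ 2 <= mass u.
Proof.
  intros Hu; apply (le_Series_zfold (fun n => Cmod (u n) ^ 2)); auto; intros; apply pow2_ge_0.
Qed.

Lemma zsum_le_mass (u : Z -> C) (J : nat) :
  in_l2 u -> zsum (fun n => Cmod (u n) ^ 2) J <= mass u.
Proof. intros Hu; apply zsum_le_Series; auto; intros; apply pow2_ge_0. Qed.

Lemma mass_nonneg (u : Z -> C) : in_l2 u -> 0 <= mass u.
Proof.
  intros Hu; apply Rle_trans with (Cmod (u 0%Z) ^ 2);
    [apply pow2_ge_0 | apply Cmod_sqr_le_mass, Hu].
Qed.

Lemma zsum_shift_le_mass (u : Z -> C) (J : nat) :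
  in_l2 u -> zsum (fun n => Cmod (u (n + 1)%Z) ^ 2) J <= mass u.
Proof.
  intros Hu; rewrite (zsum_shift (fun n => Cmod (u n) ^ 2)).
  eapply Rle_trans; [|apply (zsum_le_mass u (S J) Hu)]; rewrite zsum_S.
  replace (Z.of_nat J + 1)%Z with (Z.of_nat (S J)) by lia.
  pose proof (pow2_ge_0 (Cmod (u (- Z.of_nat J - 1)%Z))).
  pose proof (pow2_ge_0 (Cmod (u (- (Z.of_nat (S J) + 1))%Z))); lra.
Qed.

(** * Real analysis on [0, +oo) *)

Lemma locally_bounded_segment (f : R -> R) (a b : R) : a <= b ->
  (forall x, a <= x <= b -> exists d M, 0 < d /\
     forall t, a <= t <= b -> Rabs (t - x) < d -> f t <= M) ->
  exists M, forall t, a <= t <= b -> f t <= M.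
Proof.
  intros Hab Hloc.
  set (E := fun x => a <= x <= b /\ exists M, forall t, a <= t <= x -> f t <= M).
  assert (HEa : E a).
  { split; [lra|]. exists (f a); intros t Ht; replace t with a by lra; lra. }
  destruct (completeness E) as [c [Hub Hlub]].
  { exists b; intros x [Hx _]; lra. }
  { exists a; exact HEa. }
  assert (Hc : a <= c <= b) by (split; [apply Hub, HEa | apply Hlub; intros x [Hx _]; lra]).
  destruct (Hloc c Hc) as [d [M [Hd HM]]].
  assert (Hx : exists x, E x /\ c - d < x).
  { apply NNPP; intros Hn; enough (c <= c - d) by lra.
    apply Hlub; intros x Ex; apply Rnot_lt_le; intros Hlt; apply Hn; exists x; auto. }
  destruct Hx as [x [Ex Hcx]].
  assert (Hxc : x <= c) by (apply Hub, Ex).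
  destruct Ex as [Hxab [Mx HMx]].
  set (y := Rmin b (c + d / 2)).
  assert (Ey : E y).
  { split; [unfold y, Rmin; destruct Rle_dec; lra|].
    exists (Rmax Mx M); intros t Ht.
    destruct (Rle_dec t x) as [Htx|Htx].
    - apply Rle_trans with Mx; [apply HMx; lra | apply Rmax_l].
    - apply Rle_trans with M; [|apply Rmax_r].
      assert (t <= c + d / 2) by (pose proof (Rmin_r b (c + d / 2)); unfold y in Ht; lra).
      apply HM; [pose proof (Rmin_l b (c + d / 2)); unfold y in Ht; lra|].
      apply Rabs_def1; lra. }
  assert (Hyb : y = b).
  { assert (y <= c) by (apply Hub, Ey).
    unfold y, Rmin in *; destruct Rle_dec; lra. }
  rewrite Hyb in Ey; destruct Ey as [_ [M' HM']]; exists M'; exact HM'.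
Qed.

Lemma gronwall (f df : R -> R) (C T : R) : 0 <= T ->
  (forall t, 0 <= t <= T -> is_derive f t (df t)) ->
  (forall t, 0 <= t <= T -> df t <= C * f t) ->
  f T <= exp (C * T) * f 0.
Proof.
  intros HT Hf Hdf.
  set (G := fun t => exp (- C * t) * f t).
  assert (HG : forall t, 0 <= t <= T -> is_derive G t (exp (- C * t) * (df t - C * f t))).
  { intros t Ht; unfold G; auto_derive.
    - apply (ex_intro _ (df t)), Hf, Ht.
    - replace (Derive (fun x => f x) t) with (df t)
        by (symmetry; apply is_derive_unique, Hf, Ht); ring. }
  destruct (MVT_gen G 0 T (fun t => exp (- C * t) * (df t - C * f t))) as [c [Hc HGT]].
  - intros t Ht; rewrite Rmin_left, Rmax_right in Ht by lra; apply HG; lra.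
  - intros t Ht; rewrite Rmin_left, Rmax_right in Ht by lra.
    apply continuity_pt_filterlim, (ex_derive_continuous G); eexists; apply HG, Ht.
  - rewrite Rmin_left, Rmax_right in Hc by lra.
    assert (Hdecr : 0 <= exp (- C * c) * (C * f c - df c) * T).
    { apply Rmult_le_pos; [apply Rmult_le_pos; [apply Rlt_le, exp_pos|] | auto].
      pose proof (Hdf c Hc); lra. }
    assert (HG0 : G T <= G 0) by lra.
    unfold G in HG0; rewrite Rmult_0_r, exp_0, Rmult_1_l in HG0.
    replace (f T) with (exp (C * T) * (exp (- C * T) * f T))
      by (rewrite <- Rmult_assoc, <- exp_plus;
          replace (C * T + - C * T) with 0 by ring; rewrite exp_0; ring).
    apply Rmult_le_compat_l; [apply Rlt_le, exp_pos | lra].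
Qed.

Definition is_derive_halfline (x : R -> R) (t l : R) : Prop :=
  forall eps, 0 < eps -> exists d, 0 < d /\ forall s, s <> 0 -> 0 <= t + s -> Rabs s < d ->
    Rabs ((x (t + s) - x t) / s - l) < eps.

(* With [v] the right derivative of [x] at 0, this turns derivatives relative to
   [0, +oo) into two-sided ones, as the mean value theorem requires. *)
Definition extend_left (x : R -> R) (v t : R) : R :=
  if Rle_dec 0 t then x t else x 0 + t * v.

Lemma extend_left_ge0 (x : R -> R) (v t : R) : 0 <= t -> extend_left x v t = x t.
Proof. intros Ht; unfold extend_left; destruct Rle_dec; [auto | contradiction]. Qed.

Lemma is_derive_extend_left (x dx : R -> R) (t : R) :
  (forall t, 0 <= t -> is_derive_halfline x t (dx t)) -> 0 <= t ->
  is_derive (extend_left x (dx 0)) t (dx t).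
Proof.
  intros Hx Ht; apply is_derive_Reals; intros eps Heps.
  destruct (Hx t Ht eps Heps) as [d [Hd Hq]].
  destruct (Rle_lt_or_eq_dec 0 t Ht) as [Htpos|<-].
  - assert (Hm : 0 < Rmin d t) by (apply Rmin_pos; auto).
    exists (mkposreal _ Hm); simpl; intros s Hs0 Hs.
    assert (Hsd : Rabs s < d) by (eapply Rlt_le_trans; [exact Hs | apply Rmin_l]).
    assert (Hst : 0 <= t + s)
      by (assert (Rabs s < t) by (eapply Rlt_le_trans; [exact Hs | apply Rmin_r]);
          apply Rabs_def2 in H; lra).
    rewrite !extend_left_ge0 by auto; apply Hq; auto.
  - exists (mkposreal _ Hd); simpl; intros s Hs0 Hs.
    destruct (Rle_dec 0 (0 + s)) as [Hst|Hst].
    + rewrite !extend_left_ge0 by (auto; lra); apply Hq; auto.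
    + unfold extend_left; destruct (Rle_dec 0 (0 + s)); [contradiction|].
      destruct (Rle_dec 0 0); [|lra].
      replace ((x 0 + (0 + s) * dx 0 - x 0) / s - dx 0) with 0 by (field; auto).
      rewrite Rabs_R0; auto.
Qed.

Lemma Re_quot (a b : C) (s : R) : s <> 0 -> Re ((a - b) / RtoC s)%C = (Re a - Re b) / s.
Proof. intros Hs; unfold Re, Cdiv, Cinv, Cmult, Cminus, Cplus, Copp, RtoC; simpl; field; auto. Qed.

Lemma Im_quot (a b : C) (s : R) : s <> 0 -> Im ((a - b) / RtoC s)%C = (Im a - Im b) / s.
Proof. intros Hs; unfold Im, Cdiv, Cinv, Cmult, Cminus, Cplus, Copp, RtoC; simpl; field; auto. Qed.

(** * Truncated square weights *)

Definition sq_weight (N n : Z) : Z := Z.min (n * n) (Z.max 0 (N * N + N - Z.abs n)).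

Lemma sq_weight_in (N n : Z) : (Z.abs n <= N)%Z -> sq_weight N n = (n * n)%Z.
Proof. intros; unfold sq_weight; destruct (Z.abs_spec n); nia. Qed.

Lemma sq_weight_out (N n : Z) : (0 <= N <= Z.abs n)%Z ->
  sq_weight N n = Z.max 0 (N * N + N - Z.abs n).
Proof. intros; unfold sq_weight; destruct (Z.abs_spec n); nia. Qed.

Lemma sq_weight_step (N n : Z) : (0 <= N)%Z ->
  ((sq_weight N (n + 1) - sq_weight N n) * (sq_weight N (n + 1) - sq_weight N n)
   <= 8 * sq_weight N n + 2)%Z.
Proof.
  intros HN; assert (Hw : (0 <= sq_weight N n)%Z) by (unfold sq_weight; nia).
  destruct (Z.le_gt_cases (Z.abs n) N); destruct (Z.le_gt_cases (Z.abs (n + 1)) N).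
  - rewrite !sq_weight_in by auto; nia.
  - enough (-1 <= sq_weight N (n + 1) - sq_weight N n <= 1)%Z by nia.
    assert (n = N) as -> by lia.
    rewrite (sq_weight_in N N), (sq_weight_out N (N + 1)) by lia.
    pose proof (Z.square_nonneg N); lia.
  - enough (-1 <= sq_weight N (n + 1) - sq_weight N n <= 1)%Z by nia.
    assert (n = - N - 1)%Z as -> by lia.
    rewrite (sq_weight_out N (- N - 1)), (sq_weight_in N (- N - 1 + 1)) by lia.
    pose proof (Z.square_nonneg N); lia.
  - enough (-1 <= sq_weight N (n + 1) - sq_weight N n <= 1)%Z by nia.
    rewrite !sq_weight_out by lia; lia.
Qed.

Definition radius (N : nat) : nat := N * N + N.

Definition weight (N : nat) (n : Z) : R := IZR (sq_weight (Z.of_nat N) n).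

Lemma weight_nonneg (N : nat) (n : Z) : 0 <= weight N n.
Proof. apply IZR_le; unfold sq_weight; nia. Qed.

Lemma weight_le_sqr (N : nat) (n : Z) : weight N n <= IZR n ^ 2.
Proof. unfold weight; rewrite pow_IZR; apply IZR_le; unfold sq_weight; nia. Qed.

Lemma weight_sqr (N : nat) (n : Z) : (Z.abs n <= Z.of_nat N)%Z -> weight N n = IZR n ^ 2.
Proof. intros Hn; unfold weight; rewrite sq_weight_in, mult_IZR by auto; ring. Qed.

Lemma weight_out (N : nat) (n : Z) : (Z.of_nat (radius N) <= Z.abs n)%Z -> weight N n = 0.
Proof.
  intros Hn; unfold weight, radius in *.
  apply f_equal with (f := IZR) (y := 0%Z); unfold sq_weight; nia.
Qed.

Lemma weight_step (N : nat) (n : Z) : (weight N (n + 1) - weight N n) ^ 2 <= 8 * weight N n + 2.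
Proof.
  assert (H := IZR_le _ _ (sq_weight_step (Z.of_nat N) n (Nat2Z.is_nonneg N))).
  rewrite plus_IZR, !mult_IZR, minus_IZR in H; unfold weight; lra.
Qed.

(** * The truncated variance along a solution *)

Definition moment2 (u : Z -> C) (n : Z) : R := IZR n ^ 2 * Cmod (u n) ^ 2.

Lemma moment2_nonneg (u : Z -> C) (n : Z) : 0 <= moment2 u n.
Proof. apply Rmult_le_pos; apply pow2_ge_0. Qed.

Definition cross (u : Z -> C) (n : Z) : R :=
  Re (u n) * Im (u (n + 1)%Z) - Im (u n) * Re (u (n + 1)%Z).

Lemma dGP_flux (h Omega g : R) (phi dphi : R -> Z -> C) (t : R) (n : Z) :
  dGP_eq h Omega g phi dphi t n ->
  Re (phi t n) * Re (dphi t n) + Im (phi t n) * Im (dphi t n)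
  = / h ^ 2 * (cross (phi t) (n - 1) - cross (phi t) n).
Proof.
  intros Heq; unfold cross; rewrite Z.sub_add.
  apply (f_equal Re) in Heq as HRe; apply (f_equal Im) in Heq as HIm.
  unfold dGP_eq, Re, Im in *; simpl in *.
  set (V := Omega ^ 2 * (h * IZR n) ^ 2 + g * Cmod (phi t n) ^ 2) in *.
  nra.
Qed.

Lemma cross_weight_le (D w x y x' y' : R) : D ^ 2 <= 8 * w + 2 -> 0 <= w ->
  D * (x * y' - y * x') <= (w + 1 / 4) * (x ^ 2 + y ^ 2) + 2 * (x' ^ 2 + y' ^ 2).
Proof.
  intros HD Hw.
  (* AM-GM on [D x y'] and [D y x'], then [D^2 / 8 <= w + 1/4]. *)
  pose proof (pow2_ge_0 (D * x - 4 * y')); pose proof (pow2_ge_0 (D * y + 4 * x')).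
  assert (D ^ 2 * x ^ 2 <= (8 * w + 2) * x ^ 2) by (apply Rmult_le_compat_r; nra).
  assert (D ^ 2 * y ^ 2 <= (8 * w + 2) * y ^ 2) by (apply Rmult_le_compat_r; nra).
  nra.
Qed.

Section Solution.

Variables (h : R) (phi dphi : R -> Z -> C).
Hypothesis Hh : 0 < h.
Hypothesis HC : C1_l2 h phi dphi.

Let rate_nonneg : 0 <= 2 / h ^ 2.
Proof. apply Rlt_le, Rdiv_lt_0_compat; [lra | apply pow_lt, Hh]. Qed.

Definition quot_err (t s : R) (n : Z) : C :=
  ((phi (t + s)%R n - phi t n) / RtoC s - dphi t n)%C.

Lemma in_l2_quot_err (t s : R) : 0 <= t -> 0 <= t + s -> in_l2 (quot_err t s).
Proof.
  destruct HC as [Hl2 _]; intros Ht Hts.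
  apply (in_l2_ext (fun n => / RtoC s * (phi (t + s)%R n + (-1) * phi t n) + (-1) * dphi t n)%C).
  { intros n; unfold quot_err, Cdiv; ring. }
  apply in_l2_plus; apply in_l2_scal; [apply in_l2_plus; [|apply in_l2_scal]|]; apply Hl2; auto.
Qed.

Lemma mass_quot_err_small (t : R) : 0 <= t -> forall eps, 0 < eps ->
  exists d, 0 < d /\ forall s, s <> 0 -> 0 <= t + s -> Rabs s < d -> mass (quot_err t s) < eps.
Proof.
  destruct HC as [_ [Hdiff _]]; intros Ht eps Heps.
  specialize (Hdiff t Ht); rewrite filterlim_locally in Hdiff.
  assert (Hp : 0 < sqrt (h * eps)) by (apply sqrt_lt_R0; nra).
  destruct (Hdiff (mkposreal _ Hp)) as [d Hd].
  exists d; split; [apply cond_pos|]; intros s Hs0 Hts Hsd.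
  assert (Hs : ball 0 d s).
  { unfold ball; simpl; unfold AbsRing_ball, abs, minus, plus, opp; simpl.
    rewrite Ropp_0, Rplus_0_r; exact Hsd. }
  specialize (Hd s Hs (conj Hs0 Hts)).
  unfold ball in Hd; simpl in Hd; unfold AbsRing_ball, abs, minus, plus, opp in Hd; simpl in Hd.
  rewrite Ropp_0, Rplus_0_r, Rabs_pos_eq in Hd by apply sqrt_pos.
  apply sqrt_lt_0_alt in Hd; unfold mass, quot_err; nra.
Qed.

Lemma quot_err_small (t : R) : 0 <= t -> forall eps, 0 < eps ->
  exists d, 0 < d /\ forall s, s <> 0 -> 0 <= t + s -> Rabs s < d ->
    forall n, Cmod (quot_err t s n) < eps.
Proof.
  intros Ht eps Heps.
  destruct (mass_quot_err_small t Ht (eps ^ 2)) as [d [Hd Hq]]; [nra|].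
  exists d; split; auto; intros s Hs0 Hts Hsd n.
  assert (Hn := Cmod_sqr_le_mass _ n (in_l2_quot_err t s Ht Hts)).
  specialize (Hq s Hs0 Hts Hsd); pose proof (Cmod_ge_0 (quot_err t s n)); nra.
Qed.

Lemma is_derive_halfline_Re (n : Z) (t : R) : 0 <= t ->
  is_derive_halfline (fun s => Re (phi s n)) t (Re (dphi t n)).
Proof.
  intros Ht eps Heps; destruct (quot_err_small t Ht eps Heps) as [d [Hd Hq]].
  exists d; split; auto; intros s Hs0 Hts Hsd; rewrite <- Re_quot by auto.
  change (Rabs (Re (quot_err t s n)) < eps).
  eapply Rle_lt_trans; [eapply Rle_trans; [apply Rmax_l | apply Rmax_Cmod] | apply Hq; auto].
Qed.

Lemma is_derive_halfline_Im (n : Z) (t : R) : 0 <= t ->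
  is_derive_halfline (fun s => Im (phi s n)) t (Im (dphi t n)).
Proof.
  intros Ht eps Heps; destruct (quot_err_small t Ht eps Heps) as [d [Hd Hq]].
  exists d; split; auto; intros s Hs0 Hts Hsd; rewrite <- Im_quot by auto.
  change (Rabs (Im (quot_err t s n)) < eps).
  eapply Rle_lt_trans; [eapply Rle_trans; [apply Rmax_r | apply Rmax_Cmod] | apply Hq; auto].
Qed.

Lemma mass_locally_bounded (t0 : R) : 0 <= t0 ->
  exists d, 0 < d /\ forall t, 0 <= t -> Rabs (t - t0) < d ->
    mass (phi t) <= 2 * mass (phi t0) + 4 * (1 + mass (dphi t0)).
Proof.
  intros Ht0; destruct (proj1 HC t0 Ht0) as [Hphi0 Hdphi0].
  destruct (mass_quot_err_small t0 Ht0 1 Rlt_0_1) as [d [Hd Hq]].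
  exists (Rmin d 1); split; [apply Rmin_pos; lra|]; intros t Ht Htd.
  pose proof (mass_nonneg _ Hphi0); pose proof (mass_nonneg _ Hdphi0).
  destruct (Req_dec t t0) as [->|Hne]; [lra|].
  set (s := t - t0); set (q := quot_err t0 s).
  assert (Hs0 : s <> 0) by (unfold s; lra).
  assert (Hts : t0 + s = t) by (unfold s; ring).
  assert (Hql2 : in_l2 q) by (apply in_l2_quot_err; lra).
  assert (Hmq : mass q < 1)
    by (apply Hq; auto; [lra | eapply Rlt_le_trans; [exact Htd | apply Rmin_l]]).
  assert (Hs1 : Rabs s ^ 2 <= 1).
  { assert (Rabs s < 1) by (eapply Rlt_le_trans; [exact Htd | apply Rmin_r]).
    pose proof (Rabs_pos s); nra. }
  assert (Hdecomp : forall n, phi t n = (phi t0 n + RtoC s * (q n + dphi t0 n))%C).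
  { intros n; unfold q, quot_err; rewrite Hts; field; intros E; apply Hs0; now injection E. }
  rewrite (mass_ext _ _ Hdecomp).
  eapply Rle_trans; [apply mass_plus_le; auto; apply in_l2_scal, in_l2_plus; auto|].
  rewrite mass_scal, Cmod_R.
  assert (mass (fun n => q n + dphi t0 n)%C <= 2 * mass q + 2 * mass (dphi t0))
    by (apply mass_plus_le; auto).
  pose proof (mass_nonneg _ Hql2); pose proof (pow2_ge_0 (Rabs s)); nra.
Qed.

Lemma mass_bounded_on (T : R) :
  0 <= T -> exists B, forall t, 0 <= t <= T -> mass (phi t) <= B.
Proof.
  intros HT; apply (locally_bounded_segment (fun t => mass (phi t))); auto.
  intros t0 Ht0; destruct (mass_locally_bounded t0 (proj1 Ht0)) as [d [Hd Hloc]].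
  eexists d, _; split; auto; intros t Ht; apply Hloc, Ht.
Qed.

Definition ext_Re (n : Z) : R -> R := extend_left (fun t => Re (phi t n)) (Re (dphi 0 n)).
Definition ext_Im (n : Z) : R -> R := extend_left (fun t => Im (phi t n)) (Im (dphi 0 n)).

Definition wmass (N : nat) (t : R) : R :=
  zsum (fun n => weight N n * (ext_Re n t ^ 2 + ext_Im n t ^ 2)) (radius N).

Definition wmass_deriv (N : nat) (t : R) : R :=
  zsum (fun n => weight N n * (2 * (Re (phi t n) * Re (dphi t n) + Im (phi t n) * Im (dphi t n))))
       (radius N).

Lemma wmass_eq (N : nat) (t : R) : 0 <= t ->
  wmass N t = zsum (fun n => weight N n * Cmod (phi t n) ^ 2) (radius N).
Proof.
  intros Ht; apply zsum_ext; intros n.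
  unfold ext_Re, ext_Im; rewrite !extend_left_ge0, Cmod2_alt by auto; auto.
Qed.

Lemma is_derive_wmass (N : nat) (t : R) : 0 <= t -> is_derive (wmass N) t (wmass_deriv N t).
Proof.
  intros Ht; unfold wmass_deriv.
  apply (is_derive_zsum (fun s n => weight N n * (ext_Re n s ^ 2 + ext_Im n s ^ 2))); intros n.
  assert (HRe : is_derive (ext_Re n) t (Re (dphi t n)))
    by (apply (is_derive_extend_left (fun t => Re (phi t n)) (fun t => Re (dphi t n)));
        auto; intros; apply is_derive_halfline_Re; auto).
  assert (HIm : is_derive (ext_Im n) t (Im (dphi t n)))
    by (apply (is_derive_extend_left (fun t => Im (phi t n)) (fun t => Im (dphi t n)));
        auto; intros; apply is_derive_halfline_Im; auto).
  auto_derive; [repeat split; eexists; eauto|].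
  replace (Derive (fun x => ext_Re n x) t) with (Re (dphi t n))
    by (symmetry; apply is_derive_unique, HRe).
  replace (Derive (fun x => ext_Im n x) t) with (Im (dphi t n))
    by (symmetry; apply is_derive_unique, HIm).
  unfold ext_Re, ext_Im; rewrite !extend_left_ge0 by auto; ring.
Qed.

Lemma wmass_le_Series_variance (N : nat) (t : R) : 0 <= t ->
  ex_series (zfold (moment2 (phi t))) ->
  wmass N t <= Series (zfold (moment2 (phi t))).
Proof.
  intros Ht HV; rewrite wmass_eq by auto.
  eapply Rle_trans; [|apply zsum_le_Series; auto; apply moment2_nonneg].
  apply zsum_le; intros n; apply Rmult_le_compat_r; [apply pow2_ge_0 | apply weight_le_sqr].
Qed.

Lemma zsum_variance_le_wmass (K : nat) (t : R) : 0 <= t ->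
  zsum (moment2 (phi t)) K <= wmass (S K) t.
Proof.
  intros Ht; rewrite wmass_eq by auto.
  rewrite (zsum_ext_range _ (fun n => weight (S K) n * Cmod (phi t n) ^ 2))
    by (intros n Hn; rewrite weight_sqr by lia; auto).
  apply zsum_le_mono; [|unfold radius; lia].
  intros n; pose proof (weight_nonneg (S K) n); pose proof (pow2_ge_0 (Cmod (phi t n))); nra.
Qed.

Variables (Omega g : R).
Hypothesis Heq : forall t n, 0 <= t -> dGP_eq h Omega g phi dphi t n.

Lemma wmass_deriv_le (N : nat) (t : R) : 0 <= t ->
  wmass_deriv N t <= 2 / h ^ 2 * (wmass N t + 3 * mass (phi t)).
Proof.
  intros Ht; assert (Hu : in_l2 (phi t)) by apply (proj1 HC t Ht).
  assert (Hflux : wmass_deriv N t = 2 / h ^ 2 *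
            zsum (fun n => (weight N (n + 1) - weight N n) * cross (phi t) n) (radius N)).
  { unfold wmass_deriv; rewrite <- zsum_by_parts, <- zsum_scal.
    - apply zsum_ext; intros n; rewrite (dGP_flux h Omega g phi dphi t n (Heq t n Ht)).
      unfold Rdiv; ring.
    - apply weight_out; lia.
    - apply weight_out; lia. }
  rewrite Hflux, wmass_eq by auto.
  apply Rmult_le_compat_l; [exact rate_nonneg|].
  eapply Rle_trans.
  { apply (zsum_le _ (fun n => weight N n * Cmod (phi t n) ^ 2
                               + (1 / 4 * Cmod (phi t n) ^ 2 + 2 * Cmod (phi t (n + 1)%Z) ^ 2))).
    intros n; rewrite !Cmod2_alt; unfold cross.
    eapply Rle_trans; [apply cross_weight_le; [apply weight_step | apply weight_nonneg]|].
    right; ring. }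
  rewrite !zsum_plus, !zsum_scal.
  pose proof (zsum_le_mass (phi t) (radius N) Hu).
  pose proof (zsum_shift_le_mass (phi t) (radius N) Hu).
  pose proof (mass_nonneg _ Hu); lra.
Qed.

Lemma wmass_le (N : nat) (T B : R) : 0 <= T -> (forall t, 0 <= t <= T -> mass (phi t) <= B) ->
  wmass N T <= exp (2 / h ^ 2 * T) * (wmass N 0 + 3 * B).
Proof.
  intros HT HB.
  assert (HB0 : 0 <= B).
  { apply Rle_trans with (mass (phi 0)); [apply mass_nonneg, (proj1 HC 0); lra | apply HB; lra]. }
  enough (wmass N T + 3 * B <= exp (2 / h ^ 2 * T) * (wmass N 0 + 3 * B)) by lra.
  apply (gronwall (fun t => wmass N t + 3 * B) (wmass_deriv N)); auto.
  - intros t Ht; replace (wmass_deriv N t) with (wmass_deriv N t + 0) by ring.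
    apply (is_derive_plus (wmass N) (fun _ => 3 * B));
      [apply is_derive_wmass; tauto | apply (@is_derive_const R_AbsRing R_NormedModule)].
  - intros t Ht; eapply Rle_trans; [apply wmass_deriv_le; tauto|].
    apply Rmult_le_compat_l; [exact rate_nonneg|].
    pose proof (HB t Ht); lra.
Qed.

End Solution.

Lemma finite_variance_iff (h : R) (u : Z -> C) : 0 < h ->
  finite_variance h u <-> ex_series (zfold (moment2 u)).
Proof.
  intros Hh; unfold finite_variance; split; intros Hs.
  - apply (ex_series_zfold_ext (fun n => / h ^ 2 * ((h * IZR n) ^ 2 * Cmod (u n) ^ 2))).
    + intros n; unfold moment2; field; lra.
    + apply ex_series_zfold_scal, Hs.
  - apply (ex_series_zfold_ext (fun n => h ^ 2 * moment2 u n)).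
    + intros n; unfold moment2; ring.
    + apply ex_series_zfold_scal, Hs.
Qed.

Theorem mainTheorem3 (h Omega g : R) (phi dphi : R -> Z -> C) :
  0 < h -> g < 0 ->
  C1_l2 h phi dphi ->
  (forall t n, 0 <= t -> dGP_eq h Omega g phi dphi t n) ->
  (forall t, 0 <= t -> vanishing_bc phi t) ->
  finite_variance h (phi 0) ->
  forall t, 0 < t -> finite_variance h (phi t).
Proof.
  intros Hh _ HC Heq _ HV0 T HT.
  destruct (mass_bounded_on h phi dphi Hh HC T (Rlt_le _ _ HT)) as [B HB].
  apply (finite_variance_iff h _ Hh) in HV0; apply (finite_variance_iff h _ Hh).
  set (V0 := Series (zfold (moment2 (phi 0)))).
  apply (ex_series_zfold_bounded _ (exp (2 / h ^ 2 * T) * (V0 + 3 * B))).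
  { apply moment2_nonneg. }
  intros K; eapply Rle_trans; [apply (zsum_variance_le_wmass phi dphi); lra|].
  eapply Rle_trans; [apply (wmass_le h phi dphi Hh HC Omega g Heq); [lra | exact HB]|].
  apply Rmult_le_compat_l; [apply Rlt_le, exp_pos|].
  apply Rplus_le_compat_r, wmass_le_Series_variance; auto; lra.
Qed.
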